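(* Let $G$ and $H$ be isomorphic graphs on $n\ge 3$ vertices and let $1\le k\le n-1$. The following are equivalent: 1) $F_k(G)$ is uniquely reconstructible as the $k$-token graph of $G$. 2) $\operatorname{Aut}(F_k(G))\simeq\operatorname{Aut}(G)\times\mathbb{Z}_2$ if $k=n/2$, and $\operatorname{Aut}(F_k(G))\simeq\operatorname{Aut}(G)$ otherwise. 3) For every $\psi\in\operatorname{Iso}(F_k(H),F_k(G))$ there exists $f(\psi)\in\operatorname{Iso}(H,G)$ such that $\psi=\iota(f(\psi))$ or $\psi=\mathfrak{c}\circ\iota(f(\psi))$. 4) There exists a function $f$ assigning to every $\psi\in\operatorname{Iso}(F_k(H),F_k(G))$ a function $f(\psi):V(H)\to V(G)$ such that for every vertex $u$ of $H$, either $\psi(\kappa_H(u,k))=\kappa_G(f(\psi)(u),k)$ or $\psi(\kappa_H(u,k))=\overline{\kappa_G}(f(\psi)(u),k)$.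
   Context: $F_k(G)$ is the graph on the $k$-subsets of $V(G)$ in which $A,B$ are adjacent iff $A\triangle B$ is an edge of $G$. $\operatorname{Iso}(X,Y)$ denotes the set of graph isomorphisms $X\to Y$ and $\operatorname{Aut}(X)$ the automorphism group. For $\psi\in\operatorname{Iso}(H,G)$, $\iota(\psi):V(F_k(H))\to V(F_k(G))$ is $\iota(\psi)(A)=\{\psi(v):v\in A\}$. $\mathfrak{c}$ sends each $k$-subset $A$ of $V(G)$ to $V(G)\setminus A$ (an isomorphism $F_k(G)\to F_{n-k}(G)$). For a vertex $u$ of $G$, $\kappa_G(u,k)=\{A\in V(F_k(G)):u\in A\}$ and $\overline{\kappa_G}(u,k)=\{A\in V(F_k(G)):u\notin A\}$ (similarly for $H$). A $k$-token reconstruction of a graph $F$ is a pair $(G',\varphi)$ with $\varphi$ an isomorphism $F\to F_k(G')$. Two $k$-token reconstructions $(G,\varphi),(G,\psi)$ of $F$ are equivalent if there is $s\in\operatorname{Aut}(G)$ with $\psi=\iota(s)\circ\varphi$ or $\psi=\mathfrak{c}\circ\iota(s)\circ\varphi$. $F$ is uniquely reconstructible as the $k$-token graph of $G$ if any two $k$-token reconstructions of $F$ of the form $(G,\cdot)$ are equivalent. *)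

From HB Require Import structures.
From mathcomp Require Import all_boot all_fingroup.
From mathcomp Require Import gproduct zmodp.

Set Implicit Arguments.
Unset Strict Implicit.
Unset Printing Implicit Defensive.

Definition simple_graph (V : finType) (e : rel V) : Prop :=
  symmetric e /\ irreflexive e.

Definition is_iso (X Y : finType) (eX : rel X) (eY : rel Y) (f : X -> Y) : Prop :=
  bijective f /\ forall x y, eY (f x) (f y) = eX x y.

Definition ksub (V : finType) (k : nat) := {A : {set V} | #|A| == k}.

(* Adjacency of F_k(G): A ~ B iff A (symmetric difference) B is an edge of G. *)
Definition tok (V : finType) (e : rel V) (k : nat) : rel (ksub V k) :=
  fun A B => [exists u, exists v,
     e u v && (((val A :\: val B) :|: (val B :\: val A)) == [set u; v])].

Arguments tok {V} e k.

Definition iota_set (W V : finType) (f : W -> V) (A : {set W}) : {set V} := f @: A.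

Definition compl_set (V : finType) (A : {set V}) : {set V} := ~: A.

Definition kappa (V : finType) (u : V) (k : nat) : {set ksub V k} :=
  [set A : ksub V k | u \in val A].
Definition kappabar (V : finType) (u : V) (k : nat) : {set ksub V k} :=
  [set A : ksub V k | u \notin val A].

Arguments kappa {V} u k.
Arguments kappabar {V} u k.

Definition recon_equiv (T V : finType) (e : rel V) (k : nat)
    (phi psi : T -> ksub V k) : Prop :=
  exists s : V -> V, is_iso e e s /\
    ((forall x, val (psi x) = iota_set s (val (phi x))) \/
     (forall x, val (psi x) = compl_set (iota_set s (val (phi x))))).

Arguments recon_equiv {T V} e {k} phi psi.

Definition uniquely_reconstructible (T V : finType) (eF : rel T) (e : rel V)
    (k : nat) : Prop :=
  forall phi psi : T -> ksub V k,
    is_iso eF (tok e k) phi -> is_iso eF (tok e k) psi ->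
    recon_equiv e phi psi.

Arguments uniquely_reconstructible {T V} eF e k.

Definition GAut (X : finType) (eX : rel X) : {set {perm X}} :=
  [set s : {perm X} | [forall x, forall y, eX (s x) (s y) == eX x y]].

From HB Require Import structures.
From mathcomp Require Import all_boot all_fingroup.
From mathcomp Require Import gproduct zmodp.
From mathcomp Require Import zify.

(* Call an isomorphism psi : F_k(H) -> F_k(G) induced when psi = iota(s) or
   psi = c o iota(s) for a graph isomorphism s : H -> G.  Conditions 1 and 3
   both say that every isomorphism is induced (for 1, compare two
   reconstructions phi, psi through phi^-1 o psi; for 3, transport along a
   fixed isomorphism H -> G).  For 2, (s, b) |-> c^b o iota(s), with b only
   allowed when 2k = n, is an injective homomorphism into Aut(F_k(G)) whose
   image is the set of induced automorphisms, so counting shows it is onto iff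
   every automorphism is induced.  Conversely,
   under 4 let sigma(u) record whether psi sends kappa(u) to kappa(f u) or to
   its complement: k-sets separating two vertices force f to be injective,
   swapping u for u' in a (k-1)-set shows sigma is constant, so
   psi = iota(f) or c o iota(f); finally {u} + T and {u'} + T are adjacent
   exactly when uu' is an edge, so f is a graph isomorphism. *)

Set Implicit Arguments.
Unset Strict Implicit.
Unset Printing Implicit Defensive.

Section Counting.
Variable T : finType.

Lemma exists_subset_card (A : {set T}) m :
  m <= #|A| -> exists2 B : {set T}, B \subset A & #|B| = m.
Proof.
move=> hm; exists [set x in take m (enum A)].
  by apply/subsetP=> x; rewrite inE => /mem_take; rewrite mem_enum.
rewrite cardsE; have /card_uniqP -> : uniq (take m (enum A)).
  by rewrite take_uniq // enum_uniq.
by rewrite size_takel // -cardE.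
Qed.

Lemma exists_set_between (I E : {set T}) m :
  [disjoint I & E] -> #|I| <= m -> m + #|E| <= #|T| ->
  exists A : {set T}, [/\ I \subset A, [disjoint A & E] & #|A| = m].
Proof.
move=> dIE hI hE.
have cardU (P Q : {set T}) : [disjoint P & Q] -> #|P :|: Q| = #|P| + #|Q|.
  by move=> dPQ; apply/eqP; rewrite (leq_card_setU P Q).2.
have [B sB cB] : exists2 B : {set T}, B \subset ~: (I :|: E) & #|B| = m - #|I|.
  apply: exists_subset_card; have := cardsC (I :|: E); rewrite cardU //; lia.
have [dBI dBE] : [disjoint B & I] /\ [disjoint B & E].
  by move: sB; rewrite setCU subsetI -!disjoints_subset => /andP[].
exists (I :|: B); split; first exact: subsetUl.
  by rewrite disjoints_subset subUset -!disjoints_subset dIE.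
by rewrite cardU 1?disjoint_sym // cB; lia.
Qed.

End Counting.

Lemma exists_ksub_val (T : finType) k (A : {set T}) :
  #|A| = k -> exists X : ksub T k, val X = A.
Proof. by move=> cA; exists (exist _ A (introT eqP cA)). Qed.

Section KSubsets.
Variables (T : finType) (n k : nat).
Hypotheses (cardT : #|T| = n) (k_bounds : 1 <= k <= n - 1).

Let card_pair (u u' : T) : #|[set u; u']| <= 2.
Proof. by rewrite cards2; case: (u != u'). Qed.

Lemma ksub_inhabited : inhabited (ksub T k).
Proof.
have [A [_ _ cA]] := @exists_set_between T set0 set0 k
  ltac:(by rewrite disjoints_subset sub0set) ltac:(by rewrite cards0)
  ltac:(rewrite cards0; lia).
by have [X _] := exists_ksub_val cA.
Qed.

Lemma exists_set_avoiding2 (u u' : T) :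
  exists T0 : {set T}, [/\ u \notin T0, u' \notin T0 & #|T0| = k.-1].
Proof.
have [A [_ dA cA]] := @exists_set_between T set0 [set u; u'] k.-1
  ltac:(by rewrite disjoints_subset sub0set) ltac:(by rewrite cards0)
  ltac:(have := card_pair u u'; lia).
by exists A; rewrite (disjointFl dA (set21 u u')) (disjointFl dA (set22 u u')).
Qed.

Lemma exists_ksub_separating (u u' : T) : u != u' ->
  exists X : ksub T k, u \in val X /\ u' \notin val X.
Proof.
move=> uu'; have [T0 [uT0 u'T0 cT0]] := exists_set_avoiding2 u u'.
have [X vX] := @exists_ksub_val T k (u |: T0) ltac:(rewrite cardsU1 uT0 cT0; lia).
by exists X; rewrite vX !inE eqxx eq_sym (negbTE uu') (negbTE u'T0).
Qed.

Lemma exists_ksub_containing2 (u u' : T) : 2 <= k ->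
  exists X : ksub T k, u \in val X /\ u' \in val X.
Proof.
move=> k2.
have [A [sA _ cA]] := @exists_set_between T [set u; u'] set0 k
  ltac:(by rewrite disjoints_subset setC0 subsetT)
  ltac:(have := card_pair u u'; lia) ltac:(rewrite cards0; lia).
have [X vX] := exists_ksub_val cA.
by exists X; rewrite vX !(subsetP sA) // !inE eqxx ?orbT.
Qed.

Lemma exists_ksub_avoiding2 (u u' : T) : k + 2 <= n ->
  exists X : ksub T k, u \notin val X /\ u' \notin val X.
Proof.
move=> k2.
have [A [_ dA cA]] := @exists_set_between T set0 [set u; u'] k
  ltac:(by rewrite disjoints_subset sub0set) ltac:(by rewrite cards0)
  ltac:(have := card_pair u u'; lia).
have [X vX] := exists_ksub_val cA.
by exists X; rewrite vX (disjointFl dA (set21 u u')) (disjointFl dA (set22 u u')).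
Qed.

End KSubsets.

Definition symdiff (T : finType) (P Q : {set T}) := (P :\: Q) :|: (Q :\: P).

Definition is_edge (T : finType) (r : rel T) (D : {set T}) :=
  [exists u, exists v, r u v && (D == [set u; v])].

Lemma tokE (T : finType) (r : rel T) k (A B : ksub T k) :
  tok r k A B = is_edge r (symdiff (val A) (val B)).
Proof. by []. Qed.

Lemma symdiffC (T : finType) (P Q : {set T}) : symdiff (~: P) (~: Q) = symdiff P Q.
Proof. by apply/setP => x; rewrite !inE; case: (x \in P); case: (x \in Q). Qed.

Lemma symdiffU1 (T : finType) (T0 : {set T}) u u' :
  u \notin T0 -> u' \notin T0 -> u != u' ->
  symdiff (u |: T0) (u' |: T0) = [set u; u'].
Proof.
move=> uT0 u'T0 uu'; apply/setP => x; rewrite !inE.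
have [->|xu] := eqVneq x u; first by rewrite (negbTE uT0) (negbTE uu').
have [->|xu'] := eqVneq x u'; first by rewrite (negbTE u'T0).
by case: (x \in T0).
Qed.

Section Bijection.
Variables (X Y : finType) (f : X -> Y).
Hypothesis f_bij : bijective f.

Lemma bij_imsetC (P : {set X}) : f @: (~: P) = ~: (f @: P).
Proof.
have [g fK gK] := f_bij; have f_inj := bij_inj f_bij.
by apply/setP => y; rewrite -[y]gK !inE !mem_imset // !inE.
Qed.

Lemma symdiff_imset (P Q : {set X}) : symdiff (f @: P) (f @: Q) = f @: symdiff P Q.
Proof.
have [g fK gK] := f_bij; have f_inj := bij_inj f_bij.
by apply/setP => y; rewrite -[y]gK mem_imset // !inE !mem_imset.
Qed.

Lemma is_edge_imset (r : rel X) (r' : rel Y) (D : {set X}) :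
  (forall x y, r' (f x) (f y) = r x y) -> is_edge r' (f @: D) = is_edge r D.
Proof.
move=> f_mono; have [g fK gK] := f_bij; have f_inj := bij_inj f_bij.
apply/existsP/existsP => -[u /existsP[v /andP[ruv /eqP DE]]].
  exists (g u); apply/existsP; exists (g v); rewrite -f_mono !gK ruv /=.
  by apply/eqP/(imset_inj f_inj); rewrite DE imsetU1 imset_set1 !gK.
exists (f u); apply/existsP; exists (f v).
by rewrite f_mono ruv DE imsetU1 imset_set1 eqxx.
Qed.

End Bijection.

Lemma is_edge_pair (T : finType) (r : rel T) (a b : T) :
  symmetric r -> a != b -> is_edge r [set a; b] = r a b.
Proof.
move=> r_sym ab; apply/existsP/idP => [[u /existsP[v /andP[ruv /eqP E]]]|rab].
  have : a \in [set u; v] by rewrite -E set21.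
  have : b \in [set u; v] by rewrite -E set22.
  rewrite !inE => /orP[]/eqP bE /orP[]/eqP aE; subst a b;
    by [rewrite eqxx in ab | rewrite r_sym | ].
by exists a; apply/existsP; exists b; rewrite rab eqxx.
Qed.

Definition induced (X Y : finType) k (s : X -> Y) (psi : ksub X k -> ksub Y k) :=
  (forall A, val (psi A) = s @: val A) \/ (forall A, val (psi A) = ~: (s @: val A)).

Definition all_isos_induced (W V : finType) (h : rel W) (e : rel V) k :=
  forall psi : ksub W k -> ksub V k, is_iso (tok h k) (tok e k) psi ->
  exists s : W -> V, is_iso h e s /\ induced s psi.

Lemma tok_induced (X Y : finType) (r : rel X) (r' : rel Y) k (s : X -> Y) psi
    (A B : ksub X k) :
  is_iso r r' s -> induced s psi -> tok r' k (psi A) (psi B) = tok r k A B.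
Proof.
move=> [s_bij s_mono] [psiE|psiE]; rewrite !tokE !psiE ?symdiffC symdiff_imset //;
  exact: is_edge_imset.
Qed.

Lemma iso_comp (X Y Z : finType) (a : rel X) (b : rel Y) (c : rel Z) f g :
  is_iso a b f -> is_iso b c g -> is_iso a c (g \o f).
Proof.
move=> [f_bij f_mono] [g_bij g_mono]; split; first exact: bij_comp.
by move=> x y /=; rewrite g_mono f_mono.
Qed.

Lemma iso_inv (X Y : finType) (a : rel X) (b : rel Y) f :
  is_iso a b f -> exists f', [/\ is_iso b a f', cancel f f' & cancel f' f].
Proof.
move=> [[f' fK f'K] f_mono]; exists f'; split => //; split; first by exists f.
by move=> x y; rewrite -f_mono !f'K.
Qed.

Lemma card_imset_ksub (X Y : finType) k (f : X -> Y) (A : ksub X k) :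
  injective f -> #|f @: val A| == k.
Proof. by move=> f_inj; rewrite card_imset ?(valP A). Qed.

Definition ksub_imset (X Y : finType) k (f : X -> Y) (f_inj : injective f)
    (A : ksub X k) : ksub Y k :=
  exist _ (f @: val A) (card_imset_ksub A f_inj).

Lemma ksub_imsetK (X Y : finType) k (f : X -> Y) (g : Y -> X)
    (f_inj : injective f) (g_inj : injective g) :
  cancel f g -> cancel (ksub_imset (k := k) f_inj) (ksub_imset g_inj).
Proof.
by move=> fK A; apply: val_inj; rewrite /= -imset_comp (eq_imset _ fK) imset_id.
Qed.

Lemma ksub_imset_iso (X Y : finType) (r : rel X) (r' : rel Y) k f (f_inj : injective f) :
  is_iso r r' f -> is_iso (tok r k) (tok r' k) (ksub_imset f_inj).
Proof.
move=> fI; have [f' [f'I fK f'K]] := iso_inv fI.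
split; last by move=> A B; apply: tok_induced fI _; left.
by exists (ksub_imset (can_inj f'K)); apply: ksub_imsetK.
Qed.

Lemma all_isos_induced_precomp (U W V : finType) (u : rel U) (h : rel W) (e : rel V)
    k (g : U -> W) :
  is_iso u h g -> all_isos_induced h e k -> all_isos_induced u e k.
Proof.
move=> gI h_ind psi psiI; have [g' [g'I gK g'K]] := iso_inv gI.
have [s [sI s_ind]] := h_ind _ (iso_comp (ksub_imset_iso k (can_inj g'K) g'I) psiI).
have psiE A : psi A = psi (ksub_imset (can_inj g'K) (ksub_imset (can_inj gK) A)).
  by rewrite ksub_imsetK.
exists (s \o g); split; first exact: iso_comp gI sI.
by case: s_ind => E; [left|right] => A; rewrite psiE E /= imset_comp.
Qed.

Lemma reconstructible_iff_all_auts_induced (V : finType) (e : rel V) k :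
  all_isos_induced e e k <-> uniquely_reconstructible (tok e k) e k.
Proof.
split=> [e_ind phi psi phiI psiI|e_rec psi psiI].
  have [phi' [phi'I phiK phi'K]] := iso_inv phiI.
  have [s [sI s_ind]] := e_ind _ (iso_comp phi'I psiI).
  exists s; split => //.
  by case: s_ind => E; [left|right] => x; rewrite -[in LHS](phiK x) E.
have idI : is_iso (tok e k) (tok e k) id by split => //; exists id.
by have [s [sI E]] := e_rec id psi idI psiI; exists s.
Qed.

Lemma kappabar_neq_kappa (V : finType) k (v : V) :
  inhabited (ksub V k) -> kappabar v k != kappa v k.
Proof. by case=> X; apply/eqP => /setP /(_ X); rewrite !inE; case: (v \in val X). Qed.

Section KappaImage.
Variables (V W : finType) (e : rel V) (h : rel W) (n k : nat).
Hypotheses (e_simple : simple_graph e) (h_simple : simple_graph h).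
Hypotheses (cardV : #|V| = n) (cardW : #|W| = n) (n_ge3 : 3 <= n).
Hypothesis k_bounds : 1 <= k <= n - 1.
Variables (psi : ksub W k -> ksub V k) (f : W -> V).
Hypothesis psiI : is_iso (tok h k) (tok e k) psi.
Hypothesis psi_kappa : forall u,
  psi @: kappa u k = kappa (f u) k \/ psi @: kappa u k = kappabar (f u) k.

Let kappa_sign u := psi @: kappa u k == kappa (f u) k.

Lemma mem_kappa_image u A : (f u \in val (psi A)) = ((u \in val A) == kappa_sign u).
Proof.
have memE (S : {set ksub W k}) (S' : {set ksub V k}) :
    psi @: S = S' -> (A \in S) = (psi A \in S').
  by move<-; rewrite mem_imset //; exact: bij_inj psiI.1.
have kappa_neq := kappabar_neq_kappa (f u) (ksub_inhabited cardV k_bounds).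
rewrite /kappa_sign; case: (psi_kappa u) => E; have := memE _ _ E; rewrite !inE => ->;
  by rewrite E ?eqxx ?(negbTE kappa_neq); case: (f u \in _).
Qed.

Lemma kappa_image_inj : injective f.
Proof.
move=> u u' fE; apply/eqP; apply: contraT => uu'.
have memE (A : ksub W k) : ((u \in val A) == kappa_sign u) = ((u' \in val A) == kappa_sign u').
  by rewrite -!mem_kappa_image fE.
have [sE|sN] := eqVneq (kappa_sign u) (kappa_sign u').
  have [A [uA u'A]] := exists_ksub_separating cardW k_bounds uu'.
  by move: (memE A); rewrite uA (negbTE u'A) sE; case: (kappa_sign u').
have [k2|k1] := leqP 2 k.
  have [A [uA u'A]] := exists_ksub_containing2 cardW k_bounds u u' k2.
  by move: (memE A) sN; rewrite uA u'A; case: (kappa_sign u); case: (kappa_sign u').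
have [A [uA u'A]] := exists_ksub_avoiding2 cardW k_bounds u u' ltac:(lia).
move: (memE A) sN; rewrite (negbTE uA) (negbTE u'A).
by case: (kappa_sign u); case: (kappa_sign u').
Qed.

Lemma kappa_image_bij : bijective f.
Proof. by apply: inj_card_bij kappa_image_inj _; rewrite cardV cardW. Qed.

(* Swapping a vertex u with sign true for a vertex u' with sign false would
   add both f u and f u' to the image, which then has k + 2 elements. *)
Lemma kappa_sign_const u u' : kappa_sign u = kappa_sign u'.
Proof.
wlog /andP[su su'] : u u' / kappa_sign u && ~~ kappa_sign u'.
  move=> wlog_su; case su: (kappa_sign u); case su': (kappa_sign u') => //.
    by rewrite -su -su'; apply: wlog_su; rewrite su su'.
  by rewrite -su -su'; symmetry; apply: wlog_su; rewrite su su'.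
have uu' : u != u' by apply: contraNneq su' => <-.
have [T0 [uT0 u'T0 cT0]] := exists_set_avoiding2 cardW k_bounds u u'.
have [A vA] := @exists_ksub_val W k (u' |: T0) ltac:(rewrite cardsU1 u'T0 cT0; lia).
have [A' vA'] := @exists_ksub_val W k (u |: T0) ltac:(rewrite cardsU1 uT0 cT0; lia).
have [f' fK f'K] := kappa_image_bij; have f_inj := kappa_image_inj.
have psiA' : val (psi A') = f u |: (f u' |: val (psi A)).
  apply/setP => y; rewrite -[y]f'K !inE !mem_kappa_image vA vA' !inE !(inj_eq f_inj).
  have [->|yu] := eqVneq (f' y) u; first by rewrite su.
  by have [->|//] := eqVneq (f' y) u'; rewrite (negbTE u'T0) orbT.
have fuA : f u \notin val (psi A).
  by rewrite mem_kappa_image vA su !inE (negbTE uT0) eq_sym (negbTE uu').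
have fu'A : f u' \notin val (psi A) by rewrite mem_kappa_image vA (negbTE su') !inE eqxx.
have := valP (psi A'); rewrite psiA' cardsU1 cardsU1 !inE (inj_eq f_inj).
by rewrite negb_or uu' fuA fu'A (eqP (valP (psi A))) /= => /eqP; lia.
Qed.

Lemma kappa_image_induced : induced f psi.
Proof.
have [f' fK f'K] := kappa_image_bij; have f_inj := kappa_image_inj.
have /card_gt0P[u0 _] : 0 < #|W| by rewrite cardW; lia.
case s0: (kappa_sign u0); [left|right] => A; apply/setP => y;
  by rewrite -[y]f'K mem_kappa_image ?inE mem_imset // (kappa_sign_const _ u0) s0;
    case: (_ \in _).
Qed.

Lemma kappa_image_iso : is_iso h e f.
Proof.
have [f_bij f_inj] := (kappa_image_bij, kappa_image_inj).
split => // x y; have [<-|xy] := eqVneq x y; first by rewrite e_simple.2 h_simple.2.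
have [T0 [xT0 yT0 cT0]] := exists_set_avoiding2 cardW k_bounds x y.
have [A vA] := @exists_ksub_val W k (x |: T0) ltac:(rewrite cardsU1 xT0 cT0; lia).
have [B vB] := @exists_ksub_val W k (y |: T0) ltac:(rewrite cardsU1 yT0 cT0; lia).
have AB : symdiff (val A) (val B) = [set x; y] by rewrite vA vB symdiffU1.
have fxy : f x != f y by rewrite (inj_eq f_inj).
rewrite -(is_edge_pair h_simple.1 xy) -AB -tokE -psiI.2 tokE.
rewrite -(is_edge_pair e_simple.1 fxy); congr is_edge.
by case: kappa_image_induced => E;
  rewrite !E ?symdiffC symdiff_imset // AB imsetU1 imset_set1.
Qed.

End KappaImage.

Lemma kappa_images_all_isos_induced (V W : finType) (e : rel V) (h : rel W) n k
    (f : (ksub W k -> ksub V k) -> W -> V) :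
  simple_graph e -> simple_graph h -> #|V| = n -> #|W| = n -> 3 <= n ->
  1 <= k <= n - 1 ->
  (forall psi, is_iso (tok h k) (tok e k) psi -> forall u,
    psi @: kappa u k = kappa (f psi u) k \/ psi @: kappa u k = kappabar (f psi u) k) ->
  all_isos_induced h e k.
Proof.
move=> e_simple h_simple cardV cardW n_ge3 k_bounds f_kappa psi psiI.
have psi_kappa := f_kappa psi psiI.
exists (f psi); split.
  exact: (kappa_image_iso e_simple h_simple cardV cardW n_ge3 k_bounds psiI psi_kappa).
exact: (kappa_image_induced cardV cardW n_ge3 k_bounds psiI psi_kappa).
Qed.

Lemma induced_kappa_image (X Y : finType) k (s : X -> Y) (psi : ksub X k -> ksub Y k) u :
  injective s -> bijective psi -> induced s psi ->
  psi @: kappa u k = kappa (s u) k \/ psi @: kappa u k = kappabar (s u) k.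
Proof.
move=> s_inj [psi' psiK psi'K] s_ind.
have psi_inj := can_inj psiK.
case: s_ind => E; [left|right]; apply/setP => B;
  by rewrite -[B]psi'K mem_imset // !inE E ?inE ?negbK mem_imset.
Qed.

Lemma all_isos_induced_kappa_images (W V : finType) (h : rel W) (e : rel V) k
    (d : W -> V) :
  all_isos_induced h e k ->
  exists f : (ksub W k -> ksub V k) -> W -> V,
    forall psi, is_iso (tok h k) (tok e k) psi -> forall u,
      psi @: kappa u k = kappa (f psi u) k \/ psi @: kappa u k = kappabar (f psi u) k.
Proof.
move=> h_ind.
pose kappa_image (psi : ksub W k -> ksub V k) u v :=
  (psi @: kappa u k == kappa v k) || (psi @: kappa u k == kappabar v k).
exists (fun psi u => odflt (d u) [pick v | kappa_image psi u v]) => psi psiI u.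
have [s [sI s_ind]] := h_ind _ psiI.
case: pickP => [v /orP[]/eqP-> | /(_ (s u))]; [by left | by right |].
by rewrite /kappa_image; case: (induced_kappa_image u (bij_inj sI.1) psiI.1 s_ind) => ->; rewrite eqxx ?orbT.
Qed.

Lemma GAutP (X : finType) (r : rel X) (s : {perm X}) :
  reflect (forall x y, r (s x) (s y) = r x y) (s \in GAut r).
Proof.
rewrite inE; apply: (iffP forallP) => [s_mono x y|s_mono x].
  by have /forallP /(_ y) /eqP := s_mono x.
by apply/forallP => y; rewrite s_mono.
Qed.

Lemma group_set_GAut (X : finType) (r : rel X) : group_set (GAut r).
Proof.
apply/group_setP; split; first by apply/GAutP => x y; rewrite !perm1.
by move=> s t /GAutP s_mono /GAutP t_mono; apply/GAutP => x y; rewrite !permM t_mono s_mono.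
Qed.

Canonical GAut_group (X : finType) (r : rel X) := Group (group_set_GAut r).

Lemma perm_bij (X : finType) (s : {perm X}) : bijective s.
Proof. exact: injF_bij (@perm_inj _ s). Qed.

Lemma GAut_iso (X : finType) (r : rel X) (s : {perm X}) : s \in GAut r -> is_iso r r s.
Proof. by move/GAutP; split; first exact: perm_bij. Qed.

Lemma iso_GAut (X : finType) (r : rel X) (f : X -> X) :
  is_iso r r f -> exists2 s : {perm X}, s \in GAut r & s =1 f.
Proof.
move=> fI; exists (perm (bij_inj fI.1)); last by move=> x; rewrite permE.
by apply/GAutP => x y; rewrite !permE fI.2.
Qed.

Section InducedAutGroup.
Variables (V : finType) (e : rel V) (k : nat) (aT : finGroupType) (D : {group aT}).
Variables (m : aT -> {perm ksub V k}) (ind : aT -> {perm V}).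
Hypothesis m_morph : {in D &, {morph m : x y / (x * y)%g}}.
Hypothesis m_inj : {in D &, injective m}.
Hypothesis m_induced : {in D, forall x, ind x \in GAut e /\ induced (ind x) (m x)}.
Hypothesis m_onto_induced : forall p : {perm ksub V k}, p \in GAut (tok e k) ->
  forall s, is_iso e e s -> induced s p -> p \in m @: D.

Lemma all_auts_induced_isog : all_isos_induced e e k <-> GAut (tok e k) \isog D.
Proof.
have m_aut : m @: D \subset GAut (tok e k).
  apply/subsetP => _ /imsetP[x xD ->]; have [indI m_ind] := m_induced xD.
  by apply/GAutP => A B; apply: tok_induced (GAut_iso indI) m_ind.
have mM : morphic D m by apply/morphicP.
split=> [e_ind|Aut_isog psi psiI].
  have mD : m @: D = GAut (tok e k).
    apply/eqP; rewrite eqEsubset m_aut; apply/subsetP => p pA.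
    have [s [sI s_ind]] := e_ind _ (GAut_iso pA).
    exact: m_onto_induced pA s sI s_ind.
  rewrite isog_sym; apply: (isom_isog (morphm mM)) => //.
  by apply/isomP; split; [apply/injmP | rewrite morphimEdom].
have mD : m @: D = GAut (tok e k).
  by apply/eqP; rewrite eqEcard m_aut card_in_imset // (card_isog Aut_isog) leqnn.
have [p pA p_psi] := iso_GAut psiI.
rewrite -mD in pA; have /imsetP[x xD px] := pA.
have [indI m_ind] := m_induced xD.
exists (ind x); split; first exact: GAut_iso.
by case: m_ind => E; [left|right] => A; rewrite -p_psi px E.
Qed.

End InducedAutGroup.

Section TokPerm.
Variables (V : finType) (k : nat).

(* The complement of a k-subset is a k-subset only when 2k = |V|; otherwise the
   flag [b] is ignored. *)
Definition tok_perm_fun (s : {perm V}) (b : bool) (A : ksub V k) : ksub V k :=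
  insubd A (if b && (k.*2 == #|V|) then ~: (s @: val A) else s @: val A).

Lemma val_tok_perm_fun s b A :
  val (tok_perm_fun s b A) = if b && (k.*2 == #|V|) then ~: (s @: val A) else s @: val A.
Proof.
have cardsA : #|s @: val A| = k by rewrite card_imset ?(eqP (valP A)) //; exact: perm_inj.
rewrite val_insubd ifT //; case: ifP => [/andP[_ /eqP half]|_]; last by rewrite cardsA.
by apply/eqP; have := cardsC (s @: val A); rewrite cardsA; lia.
Qed.

Lemma tok_perm_fun_inj s b : injective (tok_perm_fun s b).
Proof.
move=> A B /(congr1 val); rewrite !val_tok_perm_fun => E; apply: val_inj.
by apply: (imset_inj (@perm_inj _ s)); case: ifP E => _ //; exact: setC_inj.
Qed.

Definition tok_perm s b : {perm ksub V k} := perm (@tok_perm_fun_inj s b).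

Lemma val_tok_perm s b A :
  val (tok_perm s b A) = if b && (k.*2 == #|V|) then ~: (s @: val A) else s @: val A.
Proof. by rewrite permE val_tok_perm_fun. Qed.

Lemma tok_perm_induced (s : {perm V}) b : induced s (tok_perm s b).
Proof. by case: (b && _) (val_tok_perm s b) => E; [right|left] => A; rewrite E. Qed.

Lemma tok_permM s t b c : tok_perm (s * t) (b (+) c) = (tok_perm s b * tok_perm t c)%g.
Proof.
have imsetM (A : {set V}) : (s * t)%g @: A = t @: (s @: A).
  by rewrite -imset_comp; apply: eq_imset => x; rewrite permM.
apply/permP => A; apply: val_inj; rewrite permM !val_tok_perm !imsetM.
case: (k.*2 == #|V|); rewrite ?andbF ?andbT //.
by case: b; case: c; rewrite /= ?bij_imsetC ?setCK //; exact: perm_bij.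
Qed.

End TokPerm.

Section TokPermInj.
Variables (V : finType) (n k : nat).
Hypotheses (cardV : #|V| = n) (k_bounds : 1 <= k <= n - 1).

Lemma imset_perm_inj (s t : {perm V}) :
  (forall A : ksub V k, s @: val A = t @: val A) -> s = t.
Proof.
move=> st; apply/permP => u; apply/eqP; apply: contraT => su.
set u' := (t^-1)%g (s u); have tu' : t u' = s u by rewrite permKV.
have uu' : u != u' by apply: contraNneq su => uE; rewrite {2}uE tu'.
have [A [uA u'A]] := exists_ksub_separating cardV k_bounds uu'.
have : s u \in s @: val A by rewrite mem_imset //; exact: perm_inj.
by rewrite st -tu' mem_imset ?(negbTE u'A) //; exact: perm_inj.
Qed.

(* A k-subset containing u and t^-1 (s u) has s u in both s(A) and t(A). *)
Lemma imset_perm_setC (s t : {perm V}) : 2 <= k ->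
  ~ (forall A : ksub V k, ~: (s @: val A) = t @: val A).
Proof.
move=> k2 st; have /card_gt0P[u _] : 0 < #|V| by rewrite cardV; lia.
set u' := (t^-1)%g (s u); have tu' : t u' = s u by rewrite permKV.
have [A [uA u'A]] := exists_ksub_containing2 cardV k_bounds u u' k2.
have : t u' \in t @: val A by rewrite mem_imset //; exact: perm_inj.
by rewrite -st tu' inE mem_imset ?uA //; exact: perm_inj.
Qed.

Lemma tok_perm_inj (s t : {perm V}) b c : 3 <= n -> tok_perm k s b = tok_perm k t c ->
  s = t /\ b && (k.*2 == #|V|) = c && (k.*2 == #|V|).
Proof.
move=> n_ge3 E; have valE A := congr1 (fun p : {perm ksub V k} => val (p A)) E.
have k2 b' : b' && (k.*2 == #|V|) -> 2 <= k by case/andP=> _ /eqP; lia.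
case hb: (b && _); case hc: (c && _).
- split=> //; apply: imset_perm_inj => A; apply: setC_inj.
  by have := valE A; rewrite /= !val_tok_perm hb hc.
- exfalso; apply: (imset_perm_setC (s := s) (t := t) (k2 _ hb)) => A.
  by have := valE A; rewrite /= !val_tok_perm hb hc.
- exfalso; apply: (imset_perm_setC (s := t) (t := s) (k2 _ hc)) => A.
  by have := valE A; rewrite /= !val_tok_perm hb hc => ->.
- split=> //; apply: imset_perm_inj => A.
  by have := valE A; rewrite /= !val_tok_perm hb hc.
Qed.

End TokPermInj.

Lemma odd_mulZ2 (b c : 'Z_2) : odd (b * c)%g = odd b (+) odd c.
Proof. by case: b => [[|[|?]] ?]; case: c => [[|[|?]] ?]. Qed.

Lemma odd_Z2_inj : injective (fun b : 'Z_2 => odd b).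
Proof. by case=> [[|[|?]] ?]; case=> [[|[|?]] ?] //= _; apply: val_inj. Qed.

Section AutTokGraph.
Variables (V : finType) (e : rel V) (n k : nat).
Hypotheses (cardV : #|V| = n) (n_ge3 : 3 <= n) (k_bounds : 1 <= k <= n - 1).

Lemma all_auts_induced_isog_GAut : k.*2 != n ->
  all_isos_induced e e k <-> GAut (tok e k) \isog GAut e.
Proof.
move=> not_half; have half_false : (k.*2 == #|V|) = false by rewrite cardV; exact: negbTE.
apply: (@all_auts_induced_isog _ _ _ _ _ (fun s => tok_perm k s false) id).
- by move=> s t _ _ /=; rewrite -tok_permM.
- by move=> s t _ _ /(tok_perm_inj cardV k_bounds n_ge3)[].
- by move=> s sA; split=> //; apply: tok_perm_induced.
move=> p pA s sI [E|E].
  have [t tA ts] := iso_GAut sI.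
  apply/imsetP; exists t => //; apply/permP => A; apply: val_inj.
  by rewrite val_tok_perm E /=; apply: eq_imset => x; rewrite ts.
have [A] := ksub_inhabited cardV k_bounds.
have := cardsC (s @: val A); rewrite -E (eqP (valP (p A))).
by rewrite card_imset ?(eqP (valP A)); [move: not_half; lia | exact: bij_inj sI.1].
Qed.

Lemma all_auts_induced_isog_GAutX2 : k.*2 == n ->
  all_isos_induced e e k <-> GAut (tok e k) \isog setX (GAut e) [set: 'Z_2].
Proof.
move=> half; have half_true : (k.*2 == #|V|) by rewrite cardV.
apply: (@all_auts_induced_isog _ _ _ _ (setX_group (GAut_group e) [set: 'Z_2]%G)
  (fun x => tok_perm k x.1 (odd x.2)) (fun x => x.1)).
- by move=> [s b] [t c] _ _ /=; rewrite -tok_permM odd_mulZ2.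
- move=> [s b] [t c] _ _ /= /(tok_perm_inj cardV k_bounds n_ge3)[-> bc].
  by congr pair; apply: odd_Z2_inj; move: bc; rewrite half_true !andbT.
- by move=> [s b]; rewrite inE /= => /andP[sA _]; split=> //; apply: tok_perm_induced.
move=> p pA s sI s_ind; have [t tA ts] := iso_GAut sI; apply/imsetP.
case: s_ind => E.
  exists (t, 1%g); first by rewrite inE /= tA inE.
  apply/permP => A; apply: val_inj.
  by rewrite val_tok_perm E /=; apply: eq_imset => x; rewrite ts.
exists (t, Ordinal (isT : 1 < 2)); first by rewrite inE /= tA inE.
apply/permP => A; apply: val_inj.
by rewrite val_tok_perm E /= half_true; congr (~: _); apply: eq_imset => x; rewrite ts.
Qed.

End AutTokGraph.

Unset Implicit Arguments.

Theorem theorem9 (V W : finType) (e : rel V) (h : rel W) (n k : nat) :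
  simple_graph e -> simple_graph h ->
  (exists g : W -> V, is_iso h e g) ->
  #|V| = n -> 3 <= n -> 1 <= k <= n - 1 ->
  [<->
   (* 1 *) uniquely_reconstructible (tok e k) e k;
   (* 2 *) (if k.*2 == n
            then GAut (tok e k) \isog setX (GAut e) [set: 'Z_2]
            else GAut (tok e k) \isog GAut e);
   (* 3 *) (forall psi : ksub W k -> ksub V k, is_iso (tok h k) (tok e k) psi ->
            exists fpsi : W -> V, is_iso h e fpsi /\
              ((forall A, val (psi A) = iota_set fpsi (val A)) \/
               (forall A, val (psi A) = compl_set (iota_set fpsi (val A)))));
   (* 4 *) (exists f : (ksub W k -> ksub V k) -> (W -> V),
            forall psi : ksub W k -> ksub V k, is_iso (tok h k) (tok e k) psi ->
            forall u : W,
              psi @: kappa u k = kappa (f psi u) k \/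
              psi @: kappa u k = kappabar (f psi u) k)].
Proof.
move=> e_simple h_simple [g gI] cardV n_ge3 k_bounds.
have cardW : #|W| = n by rewrite -cardV; exact: bij_eq_card gI.1.
have [g' [g'I _ _]] := iso_inv gI.
have recE := reconstructible_iff_all_auts_induced e k.
have isogE : all_isos_induced e e k <-> (if k.*2 == n
    then GAut (tok e k) \isog setX (GAut e) [set: 'Z_2]
    else GAut (tok e k) \isog GAut e).
  case: ifP => half; first exact: all_auts_induced_isog_GAutX2 cardV n_ge3 k_bounds half.
  by apply: all_auts_induced_isog_GAut cardV n_ge3 k_bounds _; rewrite half.
split; [|split; [|split]].
- by move/recE/isogE.
- by move/isogE; apply: all_isos_induced_precomp gI.
- exact: all_isos_induced_kappa_images g.
- case=> f f_kappa; apply/recE; apply: all_isos_induced_precomp g'I _.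
  exact: kappa_images_all_isos_induced e_simple h_simple cardV cardW n_ge3 k_bounds f_kappa.
Qed.
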